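(* Let $n,m$ be positive integers. For $\lambda=(\lambda_1,\dots,\lambda_n)\in\mathcal{P}^m_n$ define integers $k_{i,j}(\lambda)$, $1\le i\le j\le n$, recursively (in order of decreasing $i$, and for fixed $i$ in order of decreasing $j$) by $$k_{i,j}(\lambda)=\min\left\{m,\left\lceil\frac{\lambda_i-\sum_{\ell=j+1}^n k_{i,\ell}(\lambda)+\sum_{\ell=i+1}^j k_{\ell,j}(\lambda)}{j-i+1}\right\rceil\right\}.$$ Then the map $\bar\varphi_n:\mathcal{P}^m_n\to\mathcal{T}^m_n$ sending $\lambda$ to the tableau $\{k_{i,j}(\lambda):1\le i\le j\le n\}$ is injective.
   Context: $\mathcal{P}^m_n$ is the set of integer partitions $(\lambda_1\ge\cdots\ge\lambda_n\ge0)$ with $\lambda_i\le m(n-i+1)$ for all $i$. $\mathcal{T}^m_n$ is the set of fillings of the staircase Young diagram of shape $(n,n-1,\dots,1)$ by integers in $\{0,1,\dots,m\}$, where the entry $k_{i,j}$ occupies the box in row $i$, column $n-j+1$ ($1\le i\le j\le n$). *)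

From mathcomp Require Import all_boot all_order all_algebra.
Set Implicit Arguments. Unset Strict Implicit. Unset Printing Implicit Defensive.
Import Order.TTheory GRing.Theory Num.Theory.

(* lambda_i (1-based) of a partition stored as an n-tuple *)
Definition part (n : nat) (lam : n.-tuple nat) (i : nat) : nat := nth 0%N lam i.-1.

Definition inP (n m : nat) (lam : n.-tuple nat) : Prop :=
  (forall i, (1 <= i < n)%N -> (part lam i.+1 <= part lam i)%N) /\
  (forall i, (1 <= i <= n)%N -> (part lam i <= m * (n - i + 1))%N).

Local Open Scope ring_scope.

Definition kval (n m : nat) (lam : n.-tuple nat) (f : nat -> nat -> int)
    (i j : nat) : int :=
  Num.min (m%:Z)
    (Num.ceil ((((part lam i)%:Z - \sum_(j.+1 <= l < n.+1) f i l
                   + \sum_(i.+1 <= l < j.+1) f l j)%:~R : rat)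
               / ((j - i + 1)%N%:R))).

Definition upd (f : nat -> nat -> int) (i j : nat) (v : int) : nat -> nat -> int :=
  fun a b => if (a == i) && (b == j) then v else f a b.

Fixpoint fillrow (n m : nat) (lam : n.-tuple nat) (f : nat -> nat -> int)
    (i t : nat) : nat -> nat -> int :=
  match t with
  | 0%N => f
  | t'.+1 => let g := @fillrow n m lam f i t' in
             upd g i (n - t') (@kval n m lam g i (n - t'))
  end.

Fixpoint filltab (n m : nat) (lam : n.-tuple nat) (t : nat) : nat -> nat -> int :=
  match t with
  | 0%N => fun _ _ => 0
  | t'.+1 => let g := @filltab n m lam t' in
             @fillrow n m lam g (n - t') (t'.+1)
  end.

(* k_{i,j}(lambda), meaningful for 1 <= i <= j <= n *)
Definition kk (n m : nat) (lam : n.-tuple nat) (i j : nat) : int :=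
  @filltab n m lam n i j.

(* The row sums of the tableau recover the partition: lambda_i = sum_j k_{i,j}.
   This is shown row by row, from i = n down to 1.  Along row i, write
   r_{i,j} = lambda_i - sum_{l > j} k_{i,l} for what is left of lambda_i once
   the entries right of column j are placed.  Going leftwards, two invariants
   hold: r_{i,j} <= m (j - i + 1), so at the diagonal the cap m is inactive and
   k_{i,i} = r_{i,i}, making the row sum exact; and r_{i,j} dominates the part
   sum_{i < l <= j} k_{i+1,l} of the row below (initially lambda_{i+1} <= lambda_i),
   which keeps every numerator, hence every entry, nonnegative.  Two partitions
   with the same tableau therefore have the same parts. *)

From mathcomp Require Import all_boot all_order all_algebra zify.
Set Implicit Arguments. Unset Strict Implicit. Unset Printing Implicit Defensive.
Import Order.TTheory GRing.Theory Num.Theory.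
Local Open Scope ring_scope.

Definition ceil_div (y : int) (d : nat) : int := Num.ceil ((y%:~R : rat) / d%:R).

Lemma ceil_div_le (y z : int) (d : nat) : (0 < d)%N ->
  (ceil_div y d <= z) = (y <= z * d%:Z).
Proof.
move=> d_gt0; rewrite /ceil_div ceil_le_int ler_pdivrMr ?ltr0n //.
by rewrite -[d%:R]/((d%:Z)%:~R) -intrM ler_int.
Qed.

Lemma ceil_div_ge (y : int) (d : nat) : (0 < d)%N -> y <= ceil_div y d * d%:Z.
Proof. by move=> d_gt0; rewrite -ceil_div_le. Qed.

Lemma ceil_div1 (y : int) : ceil_div y 1 = y.
Proof. by rewrite /ceil_div divr1 intrKceil. Qed.

Lemma ceil_div_ge0 (y : int) (d : nat) : 0 <= y -> 0 <= ceil_div y d.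
Proof.
move=> y_ge0; rewrite /ceil_div ceil_ge0 (@lt_le_trans _ _ 0) //.
by rewrite divr_ge0 ?ler0n ?ler0z.
Qed.

Lemma min_ceil_div_ge0 (m y : int) (d : nat) :
  0 <= m -> 0 <= y -> 0 <= Num.min m (ceil_div y d).
Proof. by move=> m_ge0 y_ge0; rewrite le_min m_ge0 ceil_div_ge0. Qed.

Lemma min_ceil_div_step (m L k c r : int) (d : nat) : (0 < d)%N ->
  k = Num.min m (ceil_div (L + k + c) d) -> L + k <= r ->
  Num.min m (ceil_div (r + (k + c)) d.+1) <= r - L.
Proof.
move=> d_gt0; have [m_le | m_gt] := leP m (ceil_div (L + k + c) d) => k_def k_le.
  by rewrite ge_min; apply/orP; left; lia.
rewrite ge_min ceil_div_le //; apply/orP; right.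
have := ceil_div_ge (L + k + c) d_gt0; rewrite -k_def.
have : 0 <= d%:Z by [].
rewrite -addn1 PoszD; move: (d%:Z) => D; nia.
Qed.

Lemma min_ceil_div_rest (m R C : int) (e : nat) : 0 <= C -> R <= m * e.+1%:Z ->
  R - Num.min m (ceil_div (R + C) e.+1) <= m * e%:Z.
Proof.
move=> C_ge0; have [m_le | m_gt] := leP m (ceil_div (R + C) e.+1).
  by rewrite -addn1 PoszD; lia.
have := ceil_div_ge (R + C) (ltn0Sn e); have : 0 <= e%:Z by [].
move: m_gt; rewrite -addn1 PoszD; move: (e%:Z) (ceil_div _ _) => E q; nia.
Qed.

Lemma nat_down_ind (P : nat -> Prop) (i n : nat) :
  P n -> (forall j, (i <= j < n)%N -> P j.+1 -> P j) ->
  forall j, (i <= j <= n)%N -> P j.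
Proof.
move=> Pn IH j /andP[le_ij le_jn].
have -> : j = (n - (n - j))%N by lia.
have : (n - j <= n - i)%N by lia.
elim: (n - j)%N => [|k IHk] le_k; first by rewrite subn0.
apply: IH; first by lia.
have -> : (n - k.+1).+1 = (n - k)%N by lia.
by apply: IHk; lia.
Qed.

Section Fill.
Variables (n m : nat) (lam : n.-tuple nat).

Lemma eq_kval (f g : nat -> nat -> int) (i j : nat) :
  (forall l, (j < l <= n)%N -> f i l = g i l) ->
  (forall l, (i < l <= j)%N -> f l j = g l j) ->
  kval m lam f i j = kval m lam g i j.
Proof.
move=> eq_row eq_col; rewrite /kval.
rewrite (eq_big_nat _ _ (F1 := f i) (F2 := g i)) => [|l hl]; last by apply: eq_row; lia.
by rewrite (eq_big_nat _ _ (F1 := f^~ j) (F2 := g^~ j)) => // l hl; apply: eq_col; lia.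
Qed.

Lemma fillrow_outside (f : nat -> nat -> int) (i t a b : nat) :
  [|| a != i, (n < b)%N | (b + t <= n)%N] -> fillrow m lam f i t a b = f a b.
Proof.
elim: t => [|t IH] //= out_ab; rewrite /upd IH; last by move: out_ab; case: (a != i) => //=; lia.
case: eqP => [ea|] //=; case: eqP => [eb|] //=.
by move: out_ab; rewrite ea eqxx /= eb; lia.
Qed.

Lemma fillrow_fixpoint (g : nat -> nat -> int) (i s : nat) :
  (forall a b, (i < a)%N -> (a <= b <= n)%N -> g a b = kval m lam g a b) ->
  forall b, (n - s < b <= n)%N ->
  fillrow m lam g i s i b = kval m lam (fillrow m lam g i s) i b.
Proof.
move=> g_fix; elim: s => [|s IH] b /=; first by lia.
move=> hb; rewrite {1}/upd eqxx /=.
set h := fillrow m lam g i s.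
have -> : kval m lam (upd h i (n - s) (kval m lam h i (n - s))) i b = kval m lam h i b.
  apply: eq_kval => l hl; rewrite /upd; last by case: eqP => //; lia.
  by case: eqP => //= _; case: eqP => //; lia.
by case: eqP => [-> | ne] //; apply: IH; lia.
Qed.

Lemma filltab_fixpoint (t : nat) : (t <= n)%N ->
  forall a b, (n - t < a)%N -> (a <= b <= n)%N ->
  filltab m lam t a b = kval m lam (filltab m lam t) a b.
Proof.
elim: t => [|t IH] le_tn a b ha hb; first by lia.
have -> : filltab m lam t.+1 = fillrow m lam (filltab m lam t) (n - t) t.+1 by [].
set g := filltab m lam t.
have g_fix a' b' : (n - t < a')%N -> (a' <= b' <= n)%N -> g a' b' = kval m lam g a' b'.
  by move=> *; apply: IH => //; lia.
have [-> | ne] := eqVneq a (n - t)%N.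
  by apply: fillrow_fixpoint => [a' b' *|]; [apply: g_fix; lia | lia].
rewrite fillrow_outside ?ne // g_fix; try lia.
by apply: eq_kval => l hl; rewrite fillrow_outside ?ne //; apply/orP; left; apply/eqP; lia.
Qed.

Lemma kk_fixpoint (i j : nat) : (1 <= i)%N -> (i <= j <= n)%N ->
  kk m lam i j = kval m lam (kk m lam) i j.
Proof. by move=> *; apply: filltab_fixpoint => //; lia. Qed.

End Fill.

Section RowSums.
Variables (n m : nat) (lam : n.-tuple nat) (K : nat -> nat -> int).
Hypothesis lamP : inP m lam.
Hypothesis K_fixpoint : forall i j, (1 <= i)%N -> (i <= j <= n)%N ->
  K i j = kval m lam K i j.

Definition row_rest i j : int := (part lam i)%:Z - \sum_(j.+1 <= l < n.+1) K i l.
Definition col_tail i j : int := \sum_(i.+1 <= l < j.+1) K l j.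
Definition row_prefix i j : int := \sum_(i <= l < j.+1) K i l.
Definition row_exact i : Prop := (part lam i)%:Z = \sum_(i <= l < n.+1) K i l.

Lemma K_ceil i j : (1 <= i)%N -> (i <= j <= n)%N ->
  K i j = Num.min m%:Z (ceil_div (row_rest i j + col_tail i j) (j - i + 1)).
Proof. exact: K_fixpoint. Qed.

Lemma part_succ_le i : (1 <= i <= n)%N -> (part lam i.+1 <= part lam i)%N.
Proof.
move=> hi; have [lt_in | ge_in] := ltnP i n; first by apply: lamP.1; lia.
by rewrite /part nth_default ?size_tuple.
Qed.

Lemma row_exact_out : row_exact n.+1.
Proof. by rewrite /row_exact /part nth_default ?size_tuple // big_geq. Qed.

Lemma row_rest_n i : row_rest i n = part lam i.
Proof. by rewrite /row_rest big_geq // subr0. Qed.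

Lemma row_rest_pred i j : (j < n)%N -> row_rest i j = row_rest i j.+1 - K i j.+1.
Proof. by move=> lt_jn; rewrite /row_rest (@big_ltn _ _ _ j.+1) // opprD addrA addrAC. Qed.

Lemma col_tail_succ i j : (i < j)%N -> col_tail i j = K i.+1 j + col_tail i.+1 j.
Proof. by move=> lt_ij; rewrite /col_tail big_ltn. Qed.

Lemma col_tail_diag i : col_tail i i = 0.
Proof. by rewrite /col_tail big_geq. Qed.

Lemma row_prefix_succ i j : (i <= j.+1)%N ->
  row_prefix i j.+1 = row_prefix i j + K i j.+1.
Proof. by move=> le_ij; rewrite /row_prefix big_nat_recr. Qed.

Lemma row_rest_exact i j : row_exact i -> (i <= j.+1)%N -> (j <= n)%N ->
  row_rest i j = row_prefix i j.
Proof.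
move=> exact_i le_ij le_jn; rewrite /row_rest exact_i (@big_cat_nat _ _ _ j.+1) //=.
by rewrite addrK.
Qed.

Section Row.
Variable i : nat.
Hypothesis hi : (1 <= i <= n)%N.
Hypothesis below_ge0 : forall i' j, (i < i')%N -> (i' <= j <= n)%N -> 0 <= K i' j.
Hypothesis exact_below : row_exact i.+1.

Lemma col_tail_ge0 i0 j : (i <= i0)%N -> (j <= n)%N -> 0 <= col_tail i0 j.
Proof.
move=> le_i0 le_jn; rewrite /col_tail big_nat_cond sumr_ge0 // => l /andP[hl _].
by apply: below_ge0; lia.
Qed.

Lemma row_prefix_le_rest j : (i <= j <= n)%N -> row_prefix i.+1 j <= row_rest i j.
Proof.
move: j; apply: nat_down_ind => [|j hj IH].
  rewrite row_rest_n -(@row_rest_exact i.+1 n exact_below) //; last by lia.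
  by rewrite row_rest_n lez_nat part_succ_le.
rewrite row_rest_pred; last by lia.
move: IH; rewrite row_prefix_succ; last by lia.
set L := row_prefix i.+1 j; set k := K i.+1 j.+1; set c := col_tail i.+1 j.+1 => IH.
have k_def : k = Num.min m%:Z (ceil_div (L + k + c) (j - i).+1).
  rewrite {1}/k K_ceil ?(@row_rest_exact i.+1) ?row_prefix_succ //; try lia.
  by have -> : (j.+1 - i.+1 + 1 = (j - i).+1)%N by lia.
have := min_ceil_div_step (ltn0Sn _) k_def IH.
rewrite K_ceil; [|lia|lia].
rewrite col_tail_succ -/k -/c; last by lia.
have -> : (j.+1 - i + 1 = (j - i).+2)%N by lia.
lia.
Qed.

Lemma K_row_ge0 j : (i <= j <= n)%N -> 0 <= K i j.
Proof.
move=> hj; rewrite K_ceil; [apply: min_ceil_div_ge0 => // | lia | lia].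
have prefix_ge0 : 0 <= row_prefix i.+1 j.
  by rewrite /row_prefix big_nat_cond sumr_ge0 // => l /andP[hl _]; apply: below_ge0; lia.
have := row_prefix_le_rest hj; have := col_tail_ge0 (leqnn i) (ltac:(lia) : (j <= n)%N).
lia.
Qed.

Lemma row_rest_le j : (i <= j <= n)%N -> row_rest i j <= m%:Z * (j - i + 1)%N%:Z.
Proof.
move: j; apply: nat_down_ind => [|j hj IH].
  by rewrite row_rest_n -PoszM lez_nat; apply: lamP.2.
rewrite row_rest_pred; last by lia.
rewrite K_ceil; [move: IH | lia | lia].
have -> : (j.+1 - i + 1 = (j - i).+2)%N by lia.
have -> : (j - i + 1 = (j - i).+1)%N by lia.
by apply: min_ceil_div_rest; apply: col_tail_ge0; lia.
Qed.

Lemma row_exact_step : row_exact i.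
Proof.
have K_ii : K i i = row_rest i i.
  rewrite K_ceil ?col_tail_diag ?addr0 ?subnn ?ceil_div1; [|lia|lia].
  by apply/min_idPr; have := row_rest_le (ltac:(lia) : (i <= i <= n)%N); rewrite subnn mulr1.
rewrite /row_exact big_ltn; last by lia.
by rewrite K_ii /row_rest subrK.
Qed.

End Row.

Lemma rows_exact_ge0 i : (1 <= i <= n.+1)%N ->
  row_exact i /\ forall i' j, (i <= i')%N -> (i' <= j <= n)%N -> 0 <= K i' j.
Proof.
move: i; apply: nat_down_ind => [|i hi [exact_below below_ge0]].
  by split=> [|i' j *]; [exact: row_exact_out | lia].
have hi' : (1 <= i <= n)%N by lia.
split=> [|i' j le_ii' hj]; first exact: (row_exact_step hi' below_ge0).
case: (eqVneq i' i) hj => [-> | ne] hj; first exact: (K_row_ge0 hi' below_ge0 exact_below hj).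
by apply: below_ge0; lia.
Qed.

Lemma part_row_sum i : (1 <= i <= n)%N ->
  (part lam i)%:Z = \sum_(i <= l < n.+1) K i l.
Proof. by move=> hi; have [] := @rows_exact_ge0 i ltac:(lia). Qed.

End RowSums.

Lemma part_inj (n : nat) (lam mu : n.-tuple nat) :
  (forall i, (1 <= i <= n)%N -> part lam i = part mu i) -> lam = mu.
Proof.
move=> eq_part; apply: eq_from_tnth => k; rewrite !(tnth_nth 0%N).
by have := eq_part k.+1 (ltn_ord k); rewrite /part.
Qed.

Theorem theorem4p2 (n m : nat) (hn : (0 < n)%N) (hm : (0 < m)%N)
  (lam mu : n.-tuple nat) :
  inP m lam -> inP m mu ->
  (forall i j : nat, (1 <= i)%N -> (i <= j)%N -> (j <= n)%N ->
     kk m lam i j = kk m mu i j) ->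
  lam = mu.
Proof.
move=> lamP muP eq_kk; apply: part_inj => i hi; apply/eqP; rewrite -eqz_nat.
rewrite (part_row_sum lamP (@kk_fixpoint n m lam) hi).
rewrite (part_row_sum muP (@kk_fixpoint n m mu) hi).
by apply/eqP/eq_big_nat => l hl; apply: eq_kk; lia.
Qed.
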